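(* Let $A$ be a CFG-ring and $n,m\ge1$. A map $f:A^{n}\to A^{m}$ is contractive (i.e. $d(f(x),f(y))\le d(x,y)$ for all $x,y\in A^n$) if and only if there exist polynomials $f_1,\dots,f_m\in A[X_1,\dots,X_n]$ with $f(x)=(f_1(x),\dots,f_m(x))$ for all $x\in A^n$.
   Context: All rings are commutative with identity. A regular ring is a commutative von Neumann regular ring. For a regular ring $A$, $B(A)$ is the Boolean ring of idempotents of $A$ (product from $A$, sum $a\tilde+b=(a-b)^2$, $a\vee b=a+b-ab$, $a\le b\iff ab=a$), and $e(a)$ is the unique idempotent with $aA=e(a)A$. On $A^k$ the metric is $d((x_i),(y_i))=e(x_1-y_1)\vee\cdots\vee e(x_k-y_k)\in B(A)$. A Boolean metric space over a Boolean ring $B$: a set $X$ with $d:X\times X\to B$ satisfying $d(x,y)=0\iff x=y$, symmetry, and $d(x,z)\le d(x,y)\vee d(y,z)$. For $x_1,\dots,x_k\in X$, $a_1,\dots,a_k\in B$ pairwise disjoint with sum $1$, $x$ is a convex combination of the $x_i$ with coefficients $a_i$ if $a_id(x,x_i)=0$ for all $i$. $X$ is a CFG-space if all such convex combinations exist in $X$ and every element of $X$ is a convex combination of elements of some fixed finite subset of $X$. A CFG-ring is a regular ring $A$ such that $A$ with metric $d(x,y)=e(x-y)$ is a CFG-space over $B(A)$. *)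

From HB Require Import structures.
From mathcomp Require Import all_boot all_order all_algebra.
From Stdlib Require Import ClassicalEpsilon.
Set Implicit Arguments. Unset Strict Implicit. Unset Printing Implicit Defensive.
Import GRing.Theory.
Local Open Scope ring_scope.

Section Defs.
Variable A : comPzRingType.

Definition regular_ring : Prop := forall a : A, exists b : A, a * b * a = a.

Definition idempotent (e : A) : Prop := e * e = e.

Definition gen_idem (a e : A) : Prop :=
  idempotent e /\ (exists u, a = e * u) /\ (exists v, e = a * v).

(* e(a): the (in a regular ring unique) idempotent with aA = e(a)A *)
Definition eid (a : A) : A := epsilon (inhabits 0) (gen_idem a).

(* Boolean ring operations on B(A) *)
Definition bjoin (a b : A) : A := a + b - a * b.
Definition bplus (a b : A) : A := (a - b) ^+ 2.
Definition ble (a b : A) : Prop := a * b = a.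

Definition dist (k : nat) (x y : 'I_k -> A) : A :=
  \big[bjoin/0]_(i < k) eid (x i - y i).

Definition dA (x y : A) : A := eid (x - y).

Definition partition_of_unity (k : nat) (a : 'I_k -> A) : Prop :=
  (forall i, idempotent (a i)) /\
  (forall i j, i != j -> a i * a j = 0) /\
  \big[bplus/0]_(i < k) a i = 1.

Definition convex_comb (k : nat) (x : A) (xs : 'I_k -> A) (a : 'I_k -> A) : Prop :=
  forall i, a i * dA x (xs i) = 0.

(* A with d(x,y) = e(x-y) is a CFG-space over B(A) *)
Definition CFG_ring : Prop :=
  regular_ring /\
  (forall (k : nat) (xs a : 'I_k -> A), partition_of_unity a ->
      exists x, convex_comb x xs a) /\
  (exists S : seq A, forall x : A,
      exists (k : nat) (xs a : 'I_k -> A),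
        (forall i, xs i \in S) /\ partition_of_unity a /\ convex_comb x xs a).

(* a polynomial in A[X_1..X_n], as a finite list of (coefficient, exponent
   vector) monomials, and its evaluation *)
Definition mpoly_eval (n : nat) (p : seq (A * {ffun 'I_n -> nat}))
  (x : 'I_n -> A) : A :=
  \sum_(t <- p) t.1 * \prod_(i < n) x i ^+ t.2 i.

Definition contractive (n m : nat) (f : ('I_n -> A) -> ('I_m -> A)) : Prop :=
  forall x y, ble (dist (f x) (f y)) (dist x y).

End Defs.

From Pilot Require Import Defs.
From HB Require Import structures.
From mathcomp Require Import all_boot all_order all_algebra.
From Stdlib Require Import ClassicalEpsilon.
Set Implicit Arguments. Unset Strict Implicit. Unset Printing Implicit Defensive.
Import GRing.Theory.
Local Open Scope ring_scope.

(* Polynomial => contractive: with D = d(x,y), the idempotent 1 - D kills every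
   x_k - y_k, so (1 - D) x_k = (1 - D) y_k; a polynomial respects this
   congruence, hence 1 - D kills every f_j(x) - f_j(y), i.e. d(f x, f y) <= D.

   Contractive => polynomial: first, e : A -> A is a polynomial function.  Let S
   be the finite generating set; interpolation in a regular ring gives a
   polynomial P with P = e on S (divided differences exist since e(a) - e(b) is
   a multiple of a - b), and P = e everywhere because every a is a convex
   combination of points of S.  From e one builds polynomial functions h_s
   (s in S) forming a partition of unity with h_s(a) (a - s) = 0.  Expanding
   f_j(x) = prod_k (sum_s h_s(x_k)) f_j(x), contractivity gives
   f_j(x) = sum_tau (prod_k h_(tau k)(x_k)) f_j(tau), a polynomial in x. *)

Section RegularRing.
Variable A : comPzRingType.
Hypothesis hr : regular_ring A.

Lemma eidP (a : A) : gen_idem a (eid a).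
Proof.
rewrite /eid; apply: epsilon_spec.
have [b hb] := hr a; exists (a * b); split; first by rewrite /Defs.idempotent mulrA hb.
by split; [exists a; rewrite hb | exists b].
Qed.

Lemma eid_absorb (a : A) : eid a * a = a.
Proof. by have [ide [[u hu] _]] := eidP a; rewrite {2 3}hu mulrA ide. Qed.

Lemma eid_idem (a : A) : eid a * eid a = eid a.
Proof. by case: (eidP a). Qed.

Lemma eid_in_ideal (a : A) : exists v, eid a = a * v.
Proof. by case: (eidP a) => _ [_ h]. Qed.

Lemma eid_congr (F a b : A) : F * a = F * b -> F * eid a = F * eid b.
Proof.
have key x y : F * x = F * y -> F * eid x = F * eid x * eid y.
  move=> hxy; have [v ->] := eid_in_ideal x.
  rewrite mulrA hxy -[in LHS](eid_absorb y) [RHS]mulrC !mulrA.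
  by rewrite [eid y * F]mulrC.
move=> h; rewrite (key a b h) (key b a (esym h)).
by rewrite -!mulrA [eid a * _]mulrC.
Qed.

(* e(a) - e(b) lies in the ideal (a - b): the divided difference of e exists. *)
Lemma eid_diff (a b : A) : exists u, eid a - eid b = (a - b) * u.
Proof.
set E := eid (a - b).
have ha : (1 - E) * a = (1 - E) * b.
  by apply/eqP; rewrite -subr_eq0 -mulrBr mulrBl mul1r eid_absorb subrr.
have [w hw] := eid_in_ideal (a - b).
exists (w * (eid a - eid b)); rewrite mulrA -hw -/E.
apply/eqP; rewrite -subr_eq0 -[X in X - _]mul1r -mulrBl mulrBr.
by rewrite (eid_congr ha) subrr.
Qed.

Lemma ideal_cap_mul (p q z u w : A) :
  z = p * u -> z = q * w -> exists r, z = p * q * r.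
Proof.
move=> hp hq; have [p' hp'] := hr p; have [q' hq'] := hr q.
have ep : p * p' * z = z by rewrite hp mulrA hp'.
have eq : q * q' * z = z by rewrite hq mulrA hq'.
exists (p' * q' * z).
by rewrite -{1}ep -{1}eq !mulrA [p * p' * q]mulrAC.
Qed.

Lemma ideal_cap_prod (a z : A) (s : seq A) :
  (forall b, b \in s -> exists u, z = (a - b) * u) ->
  exists u, z = (\prod_(b <- s) (a - b)) * u.
Proof.
elim: s => [|b s IH] h; first by exists z; rewrite big_nil mul1r.
have [u hu] := h b (mem_head _ _).
have [w hw] : exists w, z = (\prod_(b <- s) (a - b)) * w.
  by apply: IH => c hc; apply: h; rewrite in_cons hc orbT.
by have [r ->] := ideal_cap_mul hu hw; exists r; rewrite big_cons.
Qed.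

Lemma eid_le_dist k (x y : 'I_k -> A) i :
  eid (x i - y i) * dist x y = eid (x i - y i).
Proof.
rewrite /dist; move: (mem_index_enum i); elim: (index_enum _) => [//|l r IH].
rewrite in_cons big_cons /bjoin mulrBr mulrDr.
case: (eqVneq i l) => [<- _|_ /= hi]; first by rewrite mulrA eid_idem addrK.
by rewrite IH // mulrCA IH // [eid (x l - y l) * _]mulrC addrAC subrr add0r.
Qed.

Lemma dist_annihilator k (x y : 'I_k -> A) (D : A) :
  D * dist x y = 0 <-> forall i, D * (x i - y i) = 0.
Proof.
split=> [h i|h].
  rewrite -(eid_absorb (x i - y i)) -(eid_le_dist x y i).
  by rewrite !mulrA [D * eid _ * _]mulrAC h !mul0r.
apply: (big_ind (fun z => D * z = 0)); first by rewrite mulr0.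
  by move=> a b ha hb; rewrite /bjoin mulrBr mulrDr ha hb mulrA ha mul0r addr0 subr0.
by move=> i _; have [v ->] := eid_in_ideal (x i - y i); rewrite mulrA h mul0r.
Qed.

End RegularRing.

Lemma partition_annihilator (A : comPzRingType) k (c : 'I_k -> A) (z : A) :
  partition_of_unity c -> (forall i, c i * z = 0) -> z = 0.
Proof.
case=> _ [_ hs] hz; rewrite -[z]mul1r -hs.
apply: (big_ind (fun y => y * z = 0)) => //; first by rewrite mul0r.
by move=> y1 y2 h1 h2; rewrite /bplus expr2 -mulrA [(y1 - y2) * z]mulrBl h1 h2 subrr mulr0.
Qed.

Section PolynomialFunctions.
Variables (A : comPzRingType) (n : nat).
Implicit Types g h : ('I_n -> A) -> A.

Definition polyfun g : Prop := exists p, forall x, g x = mpoly_eval p x.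

Lemma pf_ext g h : (forall x, g x = h x) -> polyfun g -> polyfun h.
Proof. by move=> e [p hp]; exists p => x; rewrite -e hp. Qed.

Lemma pf_const (c : A) : polyfun (fun _ => c).
Proof.
exists [:: (c, [ffun=> 0%N])] => x; rewrite /mpoly_eval big_seq1 /=.
by rewrite big1 ?mulr1 // => i _; rewrite ffunE expr0.
Qed.

Lemma pf_var (k : 'I_n) : polyfun (fun x => x k).
Proof.
exists [:: (1, [ffun i => nat_of_bool (i == k)])] => x.
rewrite /mpoly_eval big_seq1 /= mul1r (bigD1 k) //= ffunE eqxx expr1.
by rewrite big1 ?mulr1 // => i /negbTE hi; rewrite ffunE hi expr0.
Qed.

Lemma pf_add g h : polyfun g -> polyfun h -> polyfun (fun x => g x + h x).
Proof.
by move=> [p hp] [q hq]; exists (p ++ q) => x; rewrite /mpoly_eval big_cat /= hp hq.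
Qed.

Lemma pf_mul g h : polyfun g -> polyfun h -> polyfun (fun x => g x * h x).
Proof.
move=> [p hp] [q hq].
exists [seq (t.1 * u.1, [ffun i => (t.2 i + u.2 i)%N])
       | t : A * {ffun 'I_n -> nat} <- p, u : A * {ffun 'I_n -> nat} <- q] => x.
rewrite hp hq /mpoly_eval big_allpairs_dep mulr_suml; apply: eq_bigr => t _.
rewrite mulr_sumr; apply: eq_bigr => u _ /=.
rewrite [in RHS](eq_bigr (fun i => x i ^+ t.2 i * x i ^+ u.2 i)); last first.
  by move=> i _; rewrite ffunE exprD.
by rewrite big_split /= mulrACA.
Qed.

Section Closure.
Variable Q : (('I_n -> A) -> A) -> Prop.
Hypothesis Q_ext : forall g h, (forall x, g x = h x) -> Q g -> Q h.
Hypothesis Q_const : forall c, Q (fun _ => c).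
Hypothesis Q_add : forall g h, Q g -> Q h -> Q (fun x => g x + h x).
Hypothesis Q_mul : forall g h, Q g -> Q h -> Q (fun x => g x * h x).

Lemma Q_sum (I : Type) (r : seq I) (F : I -> ('I_n -> A) -> A) :
  (forall i, Q (F i)) -> Q (fun x => \sum_(i <- r) F i x).
Proof.
move=> hF; elim: r => [|i r IH]; first by apply: Q_ext (Q_const 0) => x; rewrite big_nil.
by apply: Q_ext (Q_add (hF i) IH) => x; rewrite big_cons.
Qed.

Lemma Q_prod (I : Type) (r : seq I) (F : I -> ('I_n -> A) -> A) :
  (forall i, Q (F i)) -> Q (fun x => \prod_(i <- r) F i x).
Proof.
move=> hF; elim: r => [|i r IH]; first by apply: Q_ext (Q_const 1) => x; rewrite big_nil.
by apply: Q_ext (Q_mul (hF i) IH) => x; rewrite big_cons.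
Qed.

Hypothesis Q_var : forall k, Q (fun x => x k).

Lemma polyfun_ind g : polyfun g -> Q g.
Proof.
move=> [p hp]; apply: Q_ext (fun x => esym (hp x)) _.
apply: Q_sum => t; apply: Q_mul => //; apply: Q_prod => i.
elim: (t.2 i) => [|e IH]; first by apply: Q_ext (Q_const 1) => x; rewrite expr0.
by apply: Q_ext (Q_mul (Q_var i) IH) => x; rewrite exprS.
Qed.

End Closure.

Lemma pf_sum (I : Type) (r : seq I) (F : I -> ('I_n -> A) -> A) :
  (forall i, polyfun (F i)) -> polyfun (fun x => \sum_(i <- r) F i x).
Proof. exact: (Q_sum (Q := polyfun) pf_ext pf_const pf_add). Qed.

Lemma pf_prod (I : Type) (r : seq I) (F : I -> ('I_n -> A) -> A) :
  (forall i, polyfun (F i)) -> polyfun (fun x => \prod_(i <- r) F i x).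
Proof. exact: (Q_prod (Q := polyfun) pf_ext pf_const pf_mul). Qed.

Lemma pf_sub g h : polyfun g -> polyfun h -> polyfun (fun x => g x - h x).
Proof.
move=> hg hh; apply: pf_add hg (pf_ext _ (pf_mul (pf_const (-1)) hh)) => x.
by rewrite mulN1r.
Qed.

Lemma pf_congr g (F : A) (x y : 'I_n -> A) :
  polyfun g -> (forall k, F * x k = F * y k) -> F * g x = F * g y.
Proof.
move=> hg hxy; apply: (polyfun_ind (Q := fun G => F * G x = F * G y)) hg => //.
- by move=> G H e; rewrite !e.
- by move=> G H hG hH; rewrite !mulrDr hG hH.
- by move=> G H hG hH; rewrite !mulrA hG -!mulrA [LHS]mulrCA [RHS]mulrCA hH.
Qed.

End PolynomialFunctions.

Section UnaryPolynomials.
Variable A : comPzRingType.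

Definition upoly (g : A -> A) : Prop := polyfun (fun y : 'I_1 -> A => g (y ord0)).

Lemma upoly_diff (g : A -> A) : upoly g ->
  forall a b, exists w, g a - g b = (a - b) * w.
Proof.
move=> hg a b.
pose Q (G : ('I_1 -> A) -> A) :=
  forall y z : 'I_1 -> A, exists w, G y - G z = (y ord0 - z ord0) * w.
suff /(_ (fun _ => a) (fun _ => b)) : Q (fun y => g (y ord0)) by [].
apply: (polyfun_ind (Q := Q)) hg.
- by move=> G H e hG y z; rewrite -!e; apply: hG.
- by move=> c y z; exists 0; rewrite subrr mulr0.
- move=> G H hG hH y z; have [w1 h1] := hG y z; have [w2 h2] := hH y z.
  by exists (w1 + w2); rewrite mulrDr -h1 -h2 addrACA opprD.
- move=> G H hG hH y z; have [w1 h1] := hG y z; have [w2 h2] := hH y z.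
  exists (w1 * H y + G z * w2).
  have -> : G y * H y - G z * H z = (G y - G z) * H y + G z * (H y - H z).
    by rewrite mulrBl mulrBr addrA subrK.
  by rewrite h1 h2 mulrDr !mulrA [G z * _]mulrC.
- by move=> k y z; exists 1; rewrite mulr1 (ord1 k).
Qed.

Lemma upoly_comp n (g : A -> A) (L : ('I_n -> A) -> A) :
  upoly g -> polyfun L -> polyfun (fun x => g (L x)).
Proof.
move=> hg hL.
pose Q (G : ('I_1 -> A) -> A) := polyfun (fun x => G (fun _ => L x)).
apply: (polyfun_ind (Q := Q)) hg => [G H e hG|c|G H|G H|k] //.
- by apply: pf_ext hG => x; rewrite e.
- exact: pf_const.
- exact: pf_add.
- exact: pf_mul.
Qed.

Lemma prod_sub_mem0 (s : seq A) (c : A) : c \in s -> \prod_(b <- s) (c - b) = 0.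
Proof.
elim: s => [//|b s IH]; rewrite in_cons big_cons => /orP [/eqP <-|h].
  by rewrite subrr mul0r.
by rewrite IH // mulr0.
Qed.

Lemma interpolation (hr : regular_ring A) (v : A -> A) (s : seq A) :
  (forall a b, exists u, v a - v b = (a - b) * u) ->
  exists P : A -> A, upoly P /\ forall a, a \in s -> P a = v a.
Proof.
move=> hv; elim: s => [|a s [P [uP hP]]].
  by exists (fun _ => 0); split => //; apply: pf_const.
have [R hR] : exists R, v a - P a = (\prod_(b <- s) (a - b)) * R.
  apply: ideal_cap_prod => // b hb.
  have [u hu] := hv a b; have [w hw] := upoly_diff uP a b.
  exists (u - w); rewrite mulrBr -hu -hw (hP b hb).
  by rewrite opprB addrA subrK.
exists (fun c => P c + R * \prod_(b <- s) (c - b)); split.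
  apply: pf_add uP _; apply: pf_mul; first exact: pf_const.
  by apply: pf_prod => b; apply: pf_sub; [apply: pf_var | apply: pf_const].
move=> c; rewrite in_cons => /orP [/eqP ->|hc].
  by rewrite mulrC -hR addrC subrK.
by rewrite prod_sub_mem0 // mulr0 addr0 hP.
Qed.

End UnaryPolynomials.

Lemma telescope (A : comPzRingType) (F : nat -> A) (N : nat) :
  \sum_(0 <= i < N) F i * \prod_(0 <= j < i) (1 - F j) =
  1 - \prod_(0 <= j < N) (1 - F j).
Proof.
elim: N => [|N IH]; first by rewrite !big_geq // subrr.
rewrite !big_nat_recr //= IH mulrBr mulr1 [F N * _]mulrC opprB addrA.
by rewrite addrAC.
Qed.

Section CFGRing.
Variable A : comPzRingType.
Hypothesis hA : CFG_ring A.

Let hr : regular_ring A. Proof. by case: hA. Qed.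

(* On a CFG-ring, the map e is a polynomial function: it agrees with an
   interpolating polynomial P on S, hence everywhere: if x is a convex
   combination of the s_i with coefficients c_i, then c_i kills x - s_i, which
   divides (P - e)(x) - (P - e)(s_i) = (P - e)(x). *)
Lemma eid_upoly : upoly (@eid A).
Proof.
case: hA => _ [_ [S hS]].
have [P [uP hP]] := interpolation hr S (eid_diff hr).
suff eP x : P x = eid x by apply: pf_ext uP => y; rewrite eP.
have [k [xs [c [hin [hc hcc]]]]] := hS x.
apply/eqP; rewrite -subr_eq0; apply/eqP; apply: (partition_annihilator hc) => i.
have h0 : c i * (x - xs i) = 0.
  by rewrite -(eid_absorb hr (x - xs i)) mulrA hcc mul0r.
have [w hw] := upoly_diff uP x (xs i).
have [u hu] := eid_diff hr x (xs i).
have -> : P x - eid x = (P x - P (xs i)) - (eid x - eid (xs i)).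
  by rewrite (hP _ (hin i)) opprB addrA subrK.
by rewrite hw hu -mulrBr mulrA h0 mul0r.
Qed.

(* It is obtained by
   disjointifying the idempotents 1 - e(a - s_i), s_i running over S. *)
Lemma poly_partition_of_unity :
  exists (N : nat) (s : nat -> A) (h : nat -> A -> A),
    [/\ forall i, upoly (h i),
        forall a, \sum_(i < N) h i a = 1 &
        forall i a, h i a * (a - s i) = 0].
Proof.
case: hA => _ [_ [S hS]].
pose s i := nth 0 S i.
pose g i a := 1 - eid (a - s i).
exists (size S), s, (fun i a => g i a * \prod_(0 <= j < i) (1 - g j a)); split.
- move=> i; have gP j : upoly (g j).
    apply: pf_sub; first exact: pf_const.
    apply: upoly_comp eid_upoly _.
    by apply: pf_sub; [exact: pf_var | exact: pf_const].
  apply: pf_mul; first exact: gP.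
  by apply: pf_prod => j; apply: pf_sub; [exact: pf_const | exact: gP].
- move=> a; rewrite -(big_mkord xpredT (fun i => g i a * \prod_(0 <= j < i) (1 - g j a))).
  rewrite telescope.
  suff -> : \prod_(0 <= j < size S) (1 - g j a) = 0 by rewrite subr0.
  have [k [xs [c [hin [hc hcc]]]]] := hS a.
  apply: (partition_annihilator hc) => i.
  have hi : (index (xs i) S < size S)%N by rewrite index_mem.
  rewrite big_mkord (bigD1 (Ordinal hi)) //= /g /s nth_index // subKr.
  by rewrite mulrA hcc mul0r.
- by move=> i a; rewrite mulrAC /g mulrBl mul1r (eid_absorb hr) subrr mul0r.
Qed.

Lemma contractive_congr n m (f : ('I_n -> A) -> ('I_m -> A)) (D : A) x y j :
  contractive f -> (forall k, D * (x k - y k) = 0) -> D * (f x j - f y j) = 0.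
Proof.
move=> hf /(dist_annihilator hr) hD.
suff /(dist_annihilator hr) : D * dist (f x) (f y) = 0 by apply.
by rewrite -(hf x y) mulrCA hD mulr0.
Qed.

(* Contractive maps are polynomial: expand f_j(x) along the partition of unity. *)
Lemma contractive_polyfun n m (f : ('I_n -> A) -> ('I_m -> A)) :
  contractive f -> forall j, polyfun (fun x => f x j).
Proof.
move=> hf j; have [N [s [h [hP hsum hsupp]]]] := poly_partition_of_unity.
pose pt (tau : {ffun 'I_n -> 'I_N}) k := s (tau k).
have expand x : f x j =
    \sum_(tau : {ffun 'I_n -> 'I_N}) (\prod_(k < n) h (tau k) (x k)) * f (pt tau) j.
  have one : \prod_(k < n) \sum_(i < N) h i (x k) = 1 by rewrite big1.
  rewrite -[LHS]mul1r -{1}one bigA_distr_bigA mulr_suml; apply: eq_bigr => tau _.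
  apply/eqP; rewrite -subr_eq0 -mulrBr; apply/eqP; apply: contractive_congr hf _ => k.
  by rewrite (bigD1 k) //= mulrAC hsupp mul0r.
apply: pf_ext (fun x => esym (expand x)) _.
apply: pf_sum => tau; apply: pf_mul; last exact: pf_const.
by apply: pf_prod => k; exact: (upoly_comp (L := fun x => x k) (hP (tau k)) (pf_var A k)).
Qed.

(* Polynomial maps are contractive: 1 - d(x,y) kills each x_k - y_k, hence
   each f_j(x) - f_j(y). *)
Lemma polyfun_contractive n m (f : ('I_n -> A) -> ('I_m -> A)) :
  (forall j, polyfun (fun x => f x j)) -> contractive f.
Proof.
move=> hp x y; set D := dist x y.
have hD k : (1 - D) * (x k - y k) = 0.
  rewrite -(eid_absorb hr (x k - y k)) mulrA mulrBl mul1r [D * _]mulrC.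
  by rewrite (eid_le_dist hr) subrr mul0r.
have hF k : (1 - D) * x k = (1 - D) * y k.
  by apply/eqP; rewrite -subr_eq0 -mulrBr hD.
have hFD : (1 - D) * dist (f x) (f y) = 0.
  apply/(dist_annihilator hr) => j; apply/eqP; rewrite mulrBr subr_eq0; apply/eqP.
  exact: pf_congr (hp j) hF.
rewrite /ble; apply/eqP; rewrite -subr_eq0 -[X in _ - X]mulr1 -mulrBr mulrC.
by rewrite -opprB mulNr hFD oppr0.
Qed.

End CFGRing.

Theorem mainTheorem2 (A : comPzRingType) (n m : nat)
  (hA : CFG_ring A) (hn : (1 <= n)%N) (hm : (1 <= m)%N)
  (f : ('I_n -> A) -> ('I_m -> A)) :
  contractive f <->
  exists p : 'I_m -> seq (A * {ffun 'I_n -> nat}),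
    forall (x : 'I_n -> A) (j : 'I_m), f x j = mpoly_eval (p j) x.
Proof.
split=> [hf | [p hp]]; last first.
  by apply: (polyfun_contractive hA) => j; exists (p j).
have hj := contractive_polyfun hA hf.
exists (fun j => epsilon (inhabits [::]) (fun p => forall x, f x j = mpoly_eval p x)).
by move=> x j; apply: (epsilon_spec (inhabits [::]) _ (hj j)).
Qed.
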